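(* Consider the uniform noising process on $[S]^d$ from $q_0$, fix $T>0$, and let $(\overleftarrow x_t)_{t\in[0,T]}$ be its reverse process. Then for all $0\le\ell<t<T$, $i\in[d]$, $c\in[S]$ and $x_\ell\in[S]^d$, $$\mathbb E_{x_t\sim\overleftarrow q_{t\mid\ell}(\cdot\mid x_\ell)}\big[s_{T-t}(x_t\oplus_ic,x_t)\big]=s_{T-\ell}(x_\ell\oplus_ic,x_\ell).$$ Equivalently, for any function $g$ of $x_\ell$, $\mathbb E_{x_t\sim\overleftarrow q_{t\mid\ell}(\cdot\mid x_\ell)}\big[(s_{T-\ell}(x_\ell\oplus_ic,x_\ell)-s_{T-t}(x_t\oplus_ic,x_t))\,g(x_\ell)\big]=0$.
   Context: Uniform noising process: time-homogeneous CTMC on $[S]^d$ with rates $Q(x,y)=1/S$ if $x,y$ are at Hamming distance one, $0$ at Hamming distance $\ge2$; $q_t$ is its time-$t$ law; $s_t(y,x)=q_t(y)/q_t(x)$. Reverse process on $[0,T]$: the CTMC started from $q_T$ with rates $\overleftarrow Q_t(x,y)=Q(y,x)s_{T-t}(y,x)$ for $x\ne y$, whose time-$t$ marginal is $q_{T-t}$; $\overleftarrow q_{t\mid\ell}(\cdot\mid x_\ell)$ is the conditional law of its state at time $t$ given state $x_\ell$ at time $\ell$. $x\oplus_i c$: $x$ with coordinate $i$ replaced by $(x^i+c)\bmod S$, convention $0\bmod S=S$. *)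

From HB Require Import structures.
From mathcomp Require Import all_boot all_order all_algebra.
From mathcomp Require Import all_classical all_reals all_analysis.
Set Implicit Arguments. Unset Strict Implicit. Unset Printing Implicit Defensive.
Import Order.TTheory GRing.Theory Num.Theory.
Import numFieldNormedType.Exports.
Local Open Scope ring_scope.

(* State space [S]^d.  Coordinate values are represented in 'I_S = {0,..,S-1},
   the value v in [S] = {1,..,S} being represented by v - 1. *)
Definition state (S d : nat) := {ffun 'I_d -> 'I_S}.

Definition hamming (S d : nat) (x y : state S d) : nat := #|[set j | x j != y j]|.

(* x (+)_i c : coordinate i replaced by (x^i + c) mod S with 0 mod S = S.
   In the shifted representation this is (x^i + c) %% S.  (insubd default is
   never used when 0 < S.) *)
Definition oplus (S d : nat) (x : state S d) (i : 'I_d) (c : nat) : state S d :=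
  [ffun j => if j == i then insubd (x j) (((x j : nat) + c) %% S)%N else x j].

Definition Qrate (R : realType) (S d : nat) (x y : state S d) : R :=
  if hamming x y == 1%N then S%:R^-1 else 0.

Definition Qgen (R : realType) (S d : nat) (x y : state S d) : R :=
  if x == y then - \sum_(z | z != x) Qrate R x z else Qrate R x y.

Definition score (R : realType) (S d : nat) (q : R -> state S d -> R)
  (t : R) (y x : state S d) : R := q t y / q t x.

Definition Qrev_rate (R : realType) (S d : nat) (q : R -> state S d -> R)
  (T t : R) (x y : state S d) : R :=
  Qrate R y x * score q (T - t) y x.

Definition Qrev (R : realType) (S d : nat) (q : R -> state S d -> R)
  (T t : R) (x y : state S d) : R :=
  if x == y then - \sum_(z | z != x) Qrev_rate q T t x z else Qrev_rate q T t x y.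

From HB Require Import structures.
From mathcomp Require Import all_boot all_order all_algebra.
From mathcomp Require Import all_classical all_reals all_analysis.
From mathcomp Require Import ring lra.
Import Order.TTheory GRing.Theory Num.Theory.
Import numFieldNormedType.Exports.
Local Open Scope ring_scope.

(* Put [H_u(y) = s_{T-u}(y (+)_i c, y)].  The uniform generator is symmetric and
   commutes with the translation [y |-> y (+)_i c], and from this one checks that
   [H] solves the backward Kolmogorov equation [d/du H_u + Qrev_u H_u = 0] of the
   reverse chain.  Pairing it with the forward equation of the reverse law [p]
   gives [d/du \sum_y p_u(y) H_u(y) = 0], so the mean of [H_t] under [p_t] equals
   its value [H_l(x_l)] at the Dirac mass [p_l].  The scores make sense because
   [q_s > 0] for [s > 0]: forward equations with a generator that is nonnegative
   off the diagonal preserve nonnegativity, and positivity then spreads along the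
   edges of the Hamming graph. *)

Section DerivativeFacts.
Context {R : realType}.

Lemma is_derive_fsum (I : finType) (h : I -> R -> R) (dh : I -> R) (x : R) :
  (forall i, is_derive x 1 (h i) (dh i)) ->
  is_derive x 1 (fun u => \sum_i h i u) (\sum_i dh i).
Proof.
move=> hd; rewrite -fct_sumE.
by elim/big_ind2: _ => // *; [exact: is_derive_cst | exact: is_deriveD].
Qed.

Lemma is_derive_expRM (k r : R) :
  is_derive r 1 (fun v => expR (k * v)) (k * expR (k * r)).
Proof.
have := is_derive1_comp (is_derive_expR (k * r))
  (is_derive_eq (is_deriveZ k (is_derive_id r 1)) (mulr1 k)).
by rewrite mulrC.
Qed.

Lemma MVT_is_derive {f df : R -> R} {a b : R} : a < b ->
  (forall x, a <= x <= b -> is_derive x 1 f (df x)) ->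
  exists2 c, a < c < b & f b - f a = df c * (b - a).
Proof.
move=> ab fD.
have fD_open x : x \in `]a, b[ -> is_derive x 1 f (df x).
  by rewrite in_itv /= => /andP[ax xb]; apply: fD; rewrite !ltW.
have f_cont : {within `[a, b], continuous f}%classic.
  apply: derivable_within_continuous => x; rewrite in_itv /= => x_ab.
  exact: @ex_derive _ _ _ _ _ _ _ (fD x x_ab).
by have [c] := MVT ab fD_open f_cont; rewrite in_itv /=; exists c.
Qed.

End DerivativeFacts.

Lemma ler_sum_term {R : numDomainType} {I : finType} (F : I -> R) (j : I) :
  (forall i, 0 <= F i) -> F j <= \sum_i F i.
Proof. by move=> F_ge0; rewrite (bigD1 j) //= lerDl sumr_ge0. Qed.

Section Barrier.
Context {R : realType}.
Local Open Scope classical_set_scope.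

Lemma is_derive_continuous {f : R -> R} {x df : R} :
  is_derive x 1 f df -> {for x, continuous f}.
Proof. by case=> fx _; apply/differentiable_continuous/derivable1_diffP. Qed.

(* Look at the first time [inf E] at which some member of the family reaches 0. *)
Lemma derive_gt0_stays_gt0 {I : finType} {w dw : I -> R -> R} :
  (forall (x : I) (r : R), is_derive r 1 (w x) (dw x r)) ->
  (forall x, 0 < w x 0) ->
  (forall (x : I) (r : R), 0 <= r -> (forall y, 0 <= w y r) -> 0 < dw x r) ->
  forall x s, 0 <= s -> 0 < w x s.
Proof.
move=> wD w0_gt0 dw_gt0 x s s_ge0; rewrite ltNge; apply/negP => wxs_le0.
pose E := [set r : R | 0 <= r /\ exists y, w y r <= 0].
have E_inf : has_inf E by split; [exists s; split=> //; exists x | exists 0 => r []].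
pose c := inf E.
have c_le r : E r -> c <= r by exact: (ge_inf E_inf.2).
have c_ge0 : 0 <= c by apply: lb_le_inf; [exact: E_inf.1 | move=> r []].
have w_gt0_before r : 0 <= r -> r < c -> forall y, 0 < w y r.
  move=> r_ge0 r_lt_c y; rewrite ltNge; apply/negP => wyr_le0.
  by have := c_le r (conj r_ge0 (ex_intro _ y wyr_le0)); rewrite leNgt r_lt_c.
have [y wyc_le0] : exists y, w y c <= 0.
  apply: contrapT => none_le0.
  have w_gt0_near : \forall r \near c, forall y, 0 < w y r.
    apply: (@filter_forall R I (fun y r => 0 < w y r) (nbhs c) _) => y.
    have wyc_gt0 : 0 < w y c by rewrite ltNge; apply/negP => ?; apply: none_le0; exists y.
    exact: (cvgr_gt _ (is_derive_continuous (wD y c)) _ wyc_gt0).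
  have [e e_gt0 ball_gt0] := (nbhs_ballP _ _).1 w_gt0_near.
  have [r Er r_lt] := inf_adherent e_gt0 E_inf.
  have [_ [z wzr_le0]] := Er.
  have c_le_r := c_le r Er; rewrite -/c in r_lt.
  have : ball c e r by rewrite /ball /= ler0_norm ?subr_le0 //; lra.
  by move/ball_gt0/(_ z); lra.
have c_gt0 : 0 < c.
  by rewrite lt_def c_ge0 andbT; apply: contraTneq wyc_le0 => ->; rewrite -ltNge.
have [xi /andP[xi_gt0 xi_lt_c]] := MVT_is_derive c_gt0 (fun r _ => wD y r).
have := dw_gt0 y xi (ltW xi_gt0) (fun z => ltW (w_gt0_before xi (ltW xi_gt0) xi_lt_c z)).
rewrite subr0; have := w0_gt0 y; have := mulr_gt0 _ c_gt0.
nra.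
Qed.

End Barrier.

Section MetzlerFlow.
Context {R : realType} {I : finType} {a : I -> I -> R} {u : R -> I -> R}.
Hypothesis a_offdiag_ge0 : forall x y, x != y -> 0 <= a y x.
Hypothesis u_ode :
  forall (s : R) x, is_derive s 1 (fun r => u r x) (\sum_y u s y * a y x).
Hypothesis u0_ge0 : forall x, 0 <= u 0 x.

(* [e^{L r} u_r] solves the forward equation of the entrywise nonnegative
   matrix [M = a + L], whose column sums stay below [2 L]. *)
Let L : R := \sum_x \sum_y `|a y x| + 1.
Let M y x : R := a y x + (y == x)%:R * L.

Let col_norm_lt x : \sum_y `|a y x| < L.
Proof.
have row_ge0 x' : 0 <= \sum_y `|a y x'| by apply: sumr_ge0 => y _.
by have := ler_sum_term _ x row_ge0; rewrite /L; lra.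
Qed.

Let L_gt0 : 0 < L.
Proof.
have : 0 <= \sum_x \sum_y `|a y x| by do 2 apply: sumr_ge0 => ? _.
rewrite /L; lra.
Qed.

Let a_le_M y x : a y x <= M y x.
Proof. by rewrite /M lerDl mulr_ge0 // ltW. Qed.

Let M_ge0 y x : 0 <= M y x.
Proof.
rewrite /M; have [->|yx] := eqVneq y x.
  have := ler_norm (- a x x); rewrite normrN mul1r.
  have := ler_sum_term (fun y => `|a y x|) x (fun y => normr_ge0 (a y x)).
  by have := col_norm_lt x; lra.
by rewrite mul0r addr0 a_offdiag_ge0 // eq_sym.
Qed.

Let sum_mulM (f : I -> R) x : \sum_y f y * M y x = \sum_y f y * a y x + L * f x.
Proof.
rewrite /M; under eq_bigr do rewrite mulrDr; rewrite big_split /=; congr (_ + _).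
rewrite (bigD1 x) //= eqxx mul1r big1 ?addr0 => [|y /negPf ->]; first exact: mulrC.
by rewrite mul0r mulr0.
Qed.

Let sum_M_lt x : \sum_y M y x < L *+ 2.
Proof.
have := sum_mulM (fun=> 1) x; under eq_bigr do rewrite mul1r; move=> ->.
under eq_bigr do rewrite mul1r.
have : \sum_y a y x <= \sum_y `|a y x| by apply: ler_sum => y _; exact: ler_norm.
by have := col_norm_lt x; rewrite mulr1 mulr2n; lra.
Qed.

Let shifted_ode (s : R) x : is_derive s 1 (fun r => expR (L * r) * u r x)
  (expR (L * s) * \sum_y u s y * M y x).
Proof.
apply: is_derive_eq (is_deriveM (is_derive_expRM L s) (u_ode s x)) _.
by rewrite sum_mulM /GRing.scale /=; ring.
Qed.

Lemma metzler_flow_ge0 (s : R) x : 0 <= s -> 0 <= u s x.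
Proof.
move=> s_ge0; apply/ler_addgt0Pr => e e_gt0.
pose eps := e / expR (L * s).
have eps_gt0 : 0 < eps by rewrite divr_gt0 ?expR_gt0.
pose w y r := expR (L * r) * (u r y + eps * expR (L * r)).
pose dw y r := expR (L * r) * (\sum_z u r z * M z y + (eps * expR (L * r)) * (L *+ 2)).
have wD y (r : R) : is_derive r 1 (w y) (dw y r).
  apply: is_derive_eq (is_deriveM (is_derive_expRM L r)
    (is_deriveD (u_ode r y) (is_deriveZ eps (is_derive_expRM L r)))) _.
  by rewrite /dw sum_mulM !fctE /GRing.scale /= -[eps *: _]/(eps * _); ring.
have w0_gt0 y : 0 < w y 0 by rewrite /w mulr0 expR0 mul1r mulr1 ltr_wpDl.
have dw_gt0 y r : 0 <= r -> (forall z, 0 <= w z r) -> 0 < dw y r.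
  move=> _ w_ge0; rewrite /dw pmulr_rgt0 ?expR_gt0 //.
  have v_ge0 z : 0 <= u r z + eps * expR (L * r).
    by have := w_ge0 z; rewrite /w pmulr_rge0 ?expR_gt0.
  have : 0 <= \sum_z (u r z + eps * expR (L * r)) * M z y.
    by apply: sumr_ge0 => z _; exact: mulr_ge0.
  under eq_bigr do rewrite mulrDl; rewrite big_split /= -mulr_sumr.
  have := sum_M_lt y; have : 0 < eps * expR (L * r) by rewrite mulr_gt0 ?expR_gt0.
  nra.
have := derive_gt0_stays_gt0 wD w0_gt0 dw_gt0 x s s_ge0.
by rewrite /w pmulr_rgt0 ?expR_gt0 // /eps divfK ?gt_eqF ?expR_gt0 // => /ltW.
Qed.

Lemma metzler_flow_gt0 x :
  0 < u 0 x \/ (exists2 y, 0 < a y x & forall s, 0 < s -> 0 < u s y) ->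
  forall s, 0 < s -> 0 < u s x.
Proof.
move=> x_fed s s_gt0.
have [xi /andP[xi_gt0 _]] := MVT_is_derive s_gt0 (fun r _ => shifted_ode r x).
rewrite mulr0 expR0 mul1r subr0 => growth.
suff : 0 < expR (L * s) * u s x by rewrite pmulr_rgt0 ?expR_gt0.
have flow_ge0 y : 0 <= u xi y by apply: metzler_flow_ge0; exact: ltW.
have terms_ge0 y : 0 <= u xi y * M y x by rewrite mulr_ge0.
set D := \sum_y u xi y * M y x in growth.
have D_ge0 : 0 <= D by exact: sumr_ge0.
have eL_gt0 : 0 < expR (L * xi) * s by rewrite mulr_gt0 ?expR_gt0.
case: x_fed => [u0x_gt0 | [y ayx_gt0 y_gt0]].
  by have := mulr_ge0 (ltW eL_gt0) D_ge0; nra.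
have D_gt0 : 0 < D.
  apply: lt_le_trans (ler_sum_term _ y terms_ge0).
  by rewrite mulr_gt0 ?y_gt0 // (lt_le_trans ayx_gt0 (a_le_M y x)).
by have := u0_ge0 x; have := mulr_gt0 eL_gt0 D_gt0; nra.
Qed.

End MetzlerFlow.

Section Duality.
Context {R : realType}.

Lemma forward_backward_pairing_const {I : finType} (A : R -> I -> I -> R)
    (p H dH : R -> I -> R) {l t : R} : l < t ->
  (forall (u : R) y, l <= u <= t -> is_derive u 1 (p^~ y) (\sum_z p u z * A u z y)) ->
  (forall (u : R) y, l <= u <= t -> is_derive u 1 (H^~ y) (dH u y)) ->
  (forall (u : R) z, l <= u <= t -> \sum_y A u z y * H u y + dH u z = 0) ->
  \sum_y p t y * H t y = \sum_y p l y * H l y.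
Proof.
move=> l_lt_t pD HD backward.
have pairingD u : l <= u <= t -> is_derive u 1 (fun r => \sum_y p r y * H r y) 0.
  move=> u_in; apply: is_derive_eq.
    exact: is_derive_fsum (fun y => is_deriveM (pD u y u_in) (HD u y u_in)).
  rewrite /GRing.scale /= big_split /= addrC.
  under eq_bigr do rewrite mulr_sumr.
  rewrite exchange_big -big_split /=; apply: big1 => z _.
  transitivity (p u z * (\sum_y A u z y * H u y + dH u z)).
    by rewrite mulrDr mulr_sumr; congr (_ + _); apply: eq_bigr => y _; ring.
  by rewrite backward // mulr0.
have [xi _] := MVT_is_derive l_lt_t pairingD.
by rewrite mul0r => /eqP; rewrite subr_eq0 => /eqP.
Qed.

End Duality.

Section HammingGraph.
Context {S d : nat}.
Implicit Types x y z : state S d.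

Lemma hamming_sym x y : hamming x y = hamming y x.
Proof. by apply: eq_card => j; rewrite !inE eq_sym. Qed.

Lemma hamming_eq0 x y : (hamming x y == 0%N) = (x == y).
Proof.
rewrite cards_eq0; apply/eqP/eqP => [xy | ->]; last by apply/setP => j; rewrite !inE eqxx.
apply/ffunP => j; apply/eqP/negPn.
by have := congr1 (fun A : {set 'I_d} => j \in A) xy; rewrite !inE => ->.
Qed.

Lemma hamming_neighbour_closer {x x0 : state S d} : x != x0 ->
  exists y, hamming y x = 1%N /\ (hamming y x0 < hamming x x0)%N.
Proof.
move=> x_neq; have [j0 xj0] : exists j0, x j0 != x0 j0.
  apply: contrapT => all_eq; move/eqP: x_neq; apply; apply/ffunP => j.
  by apply/eqP/negPn/negP => xj; apply: all_eq; exists j.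
pose y : state S d := [ffun j => if j == j0 then x0 j else x j].
exists y; split.
  rewrite /hamming -(cards1 j0); apply: eq_card => j; rewrite !inE ffunE.
  by have [->|_] := eqVneq j j0; rewrite ?eqxx // eq_sym.
rewrite /hamming (cardsD1 j0 [set j | x j != x0 j]) inE xj0 add1n ltnS.
apply/subset_leq_card/fintype.subsetP => j; rewrite !inE ffunE.
by case: (j == j0); rewrite ?eqxx.
Qed.

Hypothesis S_gt0 : (0 < S)%N.

Lemma oplusE x i c j :
  val (oplus x i c j) = if j == i then ((x j + c) %% S)%N else val (x j).
Proof. by rewrite ffunE; case: (j == i); rewrite // val_insubd ltn_pmod. Qed.

Lemma eq_oplus y z i c j : (oplus y i c j == oplus z i c j) = (y j == z j).
Proof.
rewrite -val_eqE !oplusE; case: (j == i) => //.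
by rewrite eqn_modDr !modn_small ?ltn_ord.
Qed.

Lemma oplus_inj i c : injective (fun x => oplus x i c).
Proof.
by move=> y z /= yz; apply/ffunP => j; apply/eqP; rewrite -(eq_oplus y z i c) yz.
Qed.

Lemma hamming_oplus y z i c : hamming (oplus y i c) (oplus z i c) = hamming y z.
Proof. by apply: eq_card => j; rewrite !inE eq_oplus. Qed.

End HammingGraph.

Section UniformGenerator.
Context {R : realType} {S d : nat}.
Hypothesis S_gt0 : (0 < S)%N.
Implicit Types (x y z : state S d) (r : state S d -> R).

Lemma Qrate_sym x y : Qrate R x y = Qrate R y x.
Proof. by rewrite /Qrate hamming_sym. Qed.

Lemma Qrate_ge0 x y : 0 <= Qrate R x y.
Proof. by rewrite /Qrate; case: ifP; rewrite // invr_ge0 ler0n. Qed.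

Lemma Qrate_oplus y z i c : Qrate R (oplus y i c) (oplus z i c) = Qrate R y z.
Proof. by rewrite /Qrate hamming_oplus. Qed.

Lemma Qgen_offdiag_ge0 x y : x != y -> 0 <= Qgen R y x.
Proof. by move=> xy; rewrite /Qgen eq_sym (negPf xy) Qrate_ge0. Qed.

Lemma sum_oplus (F : state S d -> R) i c : \sum_y F (oplus y i c) = \sum_y F y.
Proof. by rewrite [RHS](reindex_inj (oplus_inj S_gt0 i c)). Qed.

Lemma Qgen_sum r z : \sum_y r y * Qgen R y z = \sum_y Qrate R y z * (r y - r z).
Proof.
rewrite (bigD1 z) //= [in RHS](bigD1 z) //= subrr mulr0 add0r /Qgen eqxx.
under eq_bigr => y /negPf yz do rewrite yz mulrC.
under [\sum_(w | w != z) Qrate R z w]eq_bigr do rewrite Qrate_sym.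
rewrite mulrN mulr_sumr addrC -sumrB; apply: eq_bigr => y _; ring.
Qed.

Lemma Qgen_sum_oplus r z i c : \sum_y r y * Qgen R y (oplus z i c)
  = \sum_y Qrate R y z * (r (oplus y i c) - r (oplus z i c)).
Proof.
rewrite Qgen_sum -(sum_oplus (fun y => Qrate R y _ * _) i c).
by apply: eq_bigr => y _; rewrite Qrate_oplus.
Qed.

End UniformGenerator.

Section ReverseGenerator.
Context {R : realType} {S d : nat}.
Hypothesis S_gt0 : (0 < S)%N.
Context {q : R -> state S d -> R} {T : R}.
Implicit Types (x y z : state S d).

Lemma Qrev_apply u z (f : state S d -> R) :
  \sum_y Qrev q T u z y * f y = \sum_y Qrev_rate q T u z y * (f y - f z).
Proof.
rewrite (bigD1 z) //= [in RHS](bigD1 z) //= subrr mulr0 add0r /Qrev eqxx.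
under eq_bigr => y /negPf zy do rewrite eq_sym zy.
by rewrite mulNr mulr_suml addrC -sumrB; apply: eq_bigr => y _; ring.
Qed.

Lemma Qrev_score u z i c : (forall y, 0 < q (T - u) y) ->
  let r := q (T - u) in
  \sum_y Qrev q T u z y * score q (T - u) (oplus y i c) y
  = (\sum_y r y * Qgen R y (oplus z i c)
     - score q (T - u) (oplus z i c) z * \sum_y r y * Qgen R y z) / r z.
Proof.
move=> r_gt0 r; have r_neq0 y : r y != 0 by rewrite gt_eqF.
rewrite Qrev_apply Qgen_sum_oplus // Qgen_sum mulr_sumr -sumrB mulr_suml.
by apply: eq_bigr => y _; rewrite /Qrev_rate /score -/r; field; rewrite !r_neq0.
Qed.

End ReverseGenerator.

Section NoisingLaw.
Context {R : realType} {S d : nat}.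
Hypothesis S_gt0 : (0 < S)%N.
Context {q : R -> state S d -> R}.
Hypothesis q_ode :
  forall (s : R) x, is_derive s 1 (fun u => q u x) (\sum_y q s y * Qgen R y x).

Lemma noising_law_gt0 : (forall x, 0 <= q 0 x) -> \sum_x q 0 x != 0 ->
  forall (s : R) x, 0 < s -> 0 < q s x.
Proof.
move=> q0_ge0; rewrite psumr_neq0 // => /hasP[x0 _ /= q0x0_gt0].
suff gt0_near n x : (hamming x x0 <= n)%N -> forall s, 0 < s -> 0 < q s x.
  by move=> s x; exact: gt0_near _ x (leqnn _) s.
elim: n x => [|n IH] x x_near;
  apply: (metzler_flow_gt0 Qgen_offdiag_ge0 q_ode q0_ge0).
  by move: x_near; rewrite leqn0 hamming_eq0 => /eqP->; left.
have [->|x_neq] := eqVneq x x0; first by left.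
have [y [xy_edge y_closer]] := hamming_neighbour_closer x_neq.
right; exists y; last by apply: IH; rewrite -ltnS (leq_trans y_closer).
have yx : x != y.
  by apply/eqP => xy; move: xy_edge (hamming_eq0 x x); rewrite xy => ->; rewrite eqxx.
by rewrite /Qgen eq_sym (negPf yx) /Qrate xy_edge eqxx invr_gt0 ltr0n S_gt0.
Qed.

Lemma is_derive_reversed_law (T u : R) x :
  is_derive u 1 (fun v => q (T - v) x) (- \sum_y q (T - u) y * Qgen R y x).
Proof.
have T_minus : is_derive u 1 (fun v : R => T - v) (-1).
  exact: is_derive_eq (is_deriveB (is_derive_cst T u 1) (is_derive_id u 1)) (sub0r 1).
have := @is_derive1_comp _ (q^~ x) (fun v => T - v) u _ _ (q_ode (T - u) x) T_minus.
by rewrite mulrN1.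
Qed.

Lemma is_derive_score (T u : R) z i c : (forall y, 0 < q (T - u) y) ->
  is_derive u 1 (fun v => score q (T - v) (oplus z i c) z)
    (- \sum_y Qrev q T u z y * score q (T - u) (oplus y i c) y).
Proof.
move=> r_gt0; rewrite Qrev_score //.
have qz_neq0 : q (T - u) z != 0 by rewrite gt_eqF.
apply: is_derive_eq (is_deriveM (is_derive_reversed_law T u (oplus z i c))
  (is_deriveV qz_neq0 (is_derive_reversed_law T u z))) _.
by rewrite /score /GRing.scale /=; field.
Qed.

End NoisingLaw.

Theorem mainTheorem18 (R : realType) (S d : nat) (hS : (0 < S)%N)
  (q0 : state S d -> R)
  (hq0_nonneg : forall x, 0 <= q0 x) (hq0_sum : \sum_x q0 x = 1)
  (q : R -> state S d -> R)
  (hq_init : q 0 = q0)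
  (hq_ode : forall (t : R) (x : state S d),
      is_derive t 1 (fun u => q u x) (\sum_y q t y * Qgen R y x))
  (T : R) (hT : 0 < T)
  (l : R) (xl : state S d)
  (p : R -> state S d -> R)
  (hp_init : forall y, p l y = (y == xl)%:R)
  (hp_ode : forall (t : R) (y : state S d), t < T ->
      is_derive t 1 (fun u => p u y) (\sum_z p t z * Qrev q T t z y))
  (t : R) (hl : 0 <= l) (hlt : l < t) (htT : t < T)
  (i : 'I_d) (c : nat) (hc1 : (1 <= c)%N) (hcS : (c <= S)%N) :
  \sum_y p t y * score q (T - t) (oplus y i c) y
    = score q (T - l) (oplus xl i c) xl
  /\
  (forall g : state S d -> R,
    \sum_y p t y * ((score q (T - l) (oplus xl i c) xl
                     - score q (T - t) (oplus y i c) y) * g xl) = 0).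
Proof.
have q0_ge0 x : 0 <= q 0 x by rewrite hq_init.
have q0_neq0 : \sum_x q 0 x != 0 by rewrite hq_init hq0_sum oner_eq0.
have q_gt0 := noising_law_gt0 hS hq_ode q0_ge0 q0_neq0.
have pD u y : l <= u <= t -> is_derive u 1 (p^~ y) (\sum_z p u z * Qrev q T u z y).
  by case/andP=> _ u_le_t; apply: hp_ode; lra.
have at_l (F : state S d -> R) : \sum_y p l y * F y = F xl.
  rewrite (bigD1 xl) //= hp_init eqxx mul1r big1 ?addr0 // => y /negPf yxl.
  by rewrite hp_init yxl mul0r.
have p_mass : \sum_y p t y = 1.
  have oneD u (y : state S d) : l <= u <= t -> is_derive u 1 (fun _ => 1 : R) 0.
    by move=> _; exact: is_derive_cst.
  have one_backward u z : l <= u <= t -> \sum_y Qrev q T u z y * 1 + 0 = 0.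
    by move=> _; rewrite Qrev_apply addr0 big1 // => y _; rewrite subrr mulr0.
  have := forward_backward_pairing_const _ _ _ _ hlt pD oneD one_backward.
  by rewrite at_l; under eq_bigr do rewrite mulr1.
pose H u y := score q (T - u) (oplus y i c) y.
have HD u z : l <= u <= t -> is_derive u 1 (H^~ z) (- \sum_y Qrev q T u z y * H u y).
  case/andP=> _ u_le_t; have r_gt0 y : 0 < q (T - u) y by apply: q_gt0; lra.
  exact (is_derive_score hS hq_ode T u z i c r_gt0).
have score_mean : \sum_y p t y * H t y = H l xl.
  rewrite -at_l; apply: forward_backward_pairing_const hlt pD HD _ => u z _.
  exact: addrN.
split=> // g.
under eq_bigr do rewrite mulrA mulrBr.
by rewrite -mulr_suml sumrB -mulr_suml p_mass mul1r score_mean subrr mul0r.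
Qed.
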